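(* For every prime power $q$ and every $G\in\mathfrak{g}_3(\mathbb{F}_q)$, $G$ has exactly $q+1$ nonlooped vertices, and each nonlooped vertex of $G$ is adjacent to exactly $q$ nonlooped vertices and exactly $q^2-q$ looped vertices.
   Context: For a symmetric $n\times n$ matrix $A$, the looped graph corresponding to $A$, $\Gamma(A)$, has vertex set $\{1,\dots,n\}$, an edge $ij$ ($i\neq j$) iff $a_{ij}\neq0$, and a loop at $i$ iff $a_{ii}\ne 0$. Definition of $\mathfrak{g}_k(\mathbb{F}_q)$: let $x_1,\dots,x_m$ be representatives of the classes of nonzero vectors of $\mathbb{F}_q^k$ under the relation $x\sim cx$ ($c\in\mathbb{F}_q$, $c\neq0$), and let $U=[x_1\ \cdots\ x_m]$; $\mathfrak{g}_k(\mathbb{F}_q)$ is the set of isomorphism classes of looped graphs $\Gamma(U^tBU)$ as $B$ ranges over the invertible symmetric $k\times k$ matrices over $\mathbb{F}_q$. *)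

From HB Require Import structures.
From mathcomp Require Import all_boot all_order all_algebra all_fingroup all_field.
Set Implicit Arguments. Unset Strict Implicit. Unset Printing Implicit Defensive.
Import GRing.Theory.
Local Open Scope ring_scope.

(* A looped graph on a finite vertex type T is a relation e : rel T;
   e x y (x <> y) means xy is an edge, e x x means a loop at x. *)

Definition Gamma (R : nzRingType) (n : nat) (A : 'M[R]_n) : rel 'I_n :=
  fun i j => A i j != 0.

(* x : 'I_m -> 'cV_k is a system of representatives of the classes of
   nonzero vectors of F^k under x ~ c x (c <> 0): every x_i is nonzero,
   distinct x_i are inequivalent, and every nonzero vector is equivalent
   to some x_i. *)
Definition proj_reps (F : fieldType) (k m : nat) (x : 'I_m -> 'cV[F]_k) : Prop :=
  [/\ forall i, x i != 0,
      forall i j (c : F), c != 0 -> x i = c *: x j -> i = j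
    & forall v : 'cV[F]_k, v != 0 -> exists i, exists2 c : F, c != 0 & v = c *: x i].

Definition repmx (F : fieldType) (k m : nat) (x : 'I_m -> 'cV[F]_k) : 'M[F]_(k, m) :=
  \matrix_(i < k, j < m) x j i 0.

Definition lgraph_iso (T1 T2 : finType) (e1 : rel T1) (e2 : rel T2) : Prop :=
  exists f : T1 -> T2, bijective f /\ forall a b, e1 a b = e2 (f a) (f b).

Definition in_gk (F : fieldType) (k : nat) (T : finType) (G : rel T) : Prop :=
  exists m (x : 'I_m -> 'cV[F]_k) (B : 'M[F]_k),
    [/\ proj_reps x, B^T = B, B \in unitmx &
        lgraph_iso G (Gamma ((repmx x)^T *m B *m repmx x))].

From HB Require Import structures.
From mathcomp Require Import all_boot all_order all_algebra all_fingroup all_field.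
From mathcomp Require Import zify ring.
Set Implicit Arguments. Unset Strict Implicit. Unset Printing Implicit Defensive.
Import GRing.Theory.
Local Open Scope ring_scope.

(* Let B be an invertible symmetric 3x3 matrix over F = F_q and x_1..x_m
   representatives of the points of the projective plane.  The graph
   Gamma(U^T B U) has an edge (or loop) ij iff x_i and x_j are not orthogonal
   for the form <x, y> = x^T B y; so the nonlooped vertices are the points of
   the conic Q(x) = <x, x> = 0.
   - General facts on symmetric forms: bilinearity, nondegeneracy, and, in
     dimension <= 3, the absence of totally isotropic planes; an affine
     hyperplane <v, x> = c has q^(n-1) points.
   - Counting points: points not orthogonal to v with a scale-invariant
     property correspond to vectors y with <v, y> = 1 having it.
   - For isotropic v the plane <v, x> = 1 contains exactly q isotropic vectors
     (separately in characteristic 2 and in odd characteristic), and a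
     Chevalley-type argument shows the conic is nonempty.
   These give the three counts q + 1, q and q^2 - q for the orthogonality
   graph; the theorem follows since they are invariant under isomorphism. *)

Lemma card_bij_prod (S T U : finType) (A : {set S}) (B : {set T}) (C : {set U})
    (f : S * T -> U) (g : U -> S * T) :
  (forall a b, a \in A -> b \in B -> f (a, b) \in C /\ g (f (a, b)) = (a, b)) ->
  (forall u, u \in C -> [/\ (g u).1 \in A, (g u).2 \in B & f (g u) = u]) ->
  #|C| = (#|A| * #|B|)%N.
Proof.
move=> fP gP; rewrite -cardsX.
have -> : C = f @: setX A B.
  apply/setP => u; apply/idP/imsetP => [uC | [[a b]]].
    by have [g1 g2 fg] := gP u uC; exists (g u); rewrite ?inE ?g1 ?g2.
  by rewrite inE => /andP [aA bB] ->; case: (fP a b aA bB).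
apply: card_in_imset => [[a b] [a' b']]; rewrite !inE => /andP [aA bB] /andP [aA' bB'] e.
by have [_ <-] := fP a b aA bB; have [_ <-] := fP a' b' aA' bB'; rewrite e.
Qed.

Lemma card_pred_split (T : finType) (P R : pred T) :
  #|[set j | P j]| = (#|[set j | P j && R j]| + #|[set j | P j && ~~ R j]|)%N.
Proof.
rewrite -(cardsID [set j | R j] [set j | P j]); congr (_ + _)%N; apply: eq_card => j;
by rewrite !inE // andbC.
Qed.

Lemma card_finField_gt1 (F : finFieldType) : (1 < #|F|)%N.
Proof.
have := subset_leq_card (subsetT [set (0 : F); 1]).
by rewrite cards2 eq_sym oner_neq0 cardsT.
Qed.

(* More than half of the elements of a finite field are squares: every x is
   r s or - r s for a chosen square root r s of a square s = x^2, and 0 is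
   covered by both families. *)
Lemma card_squares_gt (F : finFieldType) :
  (#|F| < 2 * #|[set x ^+ 2 | x in [set: F]]|)%N.
Proof.
set S : {set F} := [set x ^+ 2 | x in [set: F]].
pose r (s : F) := odflt 0 [pick x | x ^+ 2 == s].
have rP x : r (x ^+ 2) = x \/ r (x ^+ 2) = - x.
  rewrite /r; case: pickP => [y /eqP yx | /(_ x)]; last by rewrite eqxx.
  have : (y - x) * (y + x) == 0 by rewrite -subr_sqr yx subrr.
  by rewrite mulf_eq0 subr_eq0 addr_eq0 => /orP [/eqP -> | /eqP ->]; [left | right].
have r0 : r 0 = 0 by case: (rP 0); rewrite expr2 mul0r ?oppr0.
have S0 : 0 \in S by apply/imsetP; exists 0; rewrite ?inE // expr2 mul0r.
pose A1 : {set F} := r @: S; pose A2 : {set F} := (fun s => - r s) @: S.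
have cover : [set: F] \subset A1 :|: (A2 :\ 0).
  apply/subsetP => x _; have xS : x ^+ 2 \in S by apply: imset_f; rewrite inE.
  have [x0 | x0] := eqVneq x 0; first by rewrite x0 !inE -{1}r0 imset_f.
  rewrite !inE x0 /=; case: (rP x) => rx; apply/orP; [left | right];
    by apply/imsetP; exists (x ^+ 2); rewrite // rx opprK.
have A20 : 0 \in A2 by apply/imsetP; exists 0; rewrite // r0 oppr0.
rewrite -cardsT; apply: leq_ltn_trans (subset_leq_card cover) _.
apply: leq_ltn_trans (leq_card_setU _ _) _.
have A1S : (#|A1| <= #|S|)%N := leq_imset_card _ _.
have : (#|A2| <= #|S|)%N := leq_imset_card _ _.
rewrite (cardsD1 0 A2) A20 add1n mul2n -addnn -addnS => A2S.
exact: leq_add A1S A2S.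
Qed.

(* Over a finite field, a x^2 + b y^2 + c = 0 is solvable when a, b != 0: the
   sets {a x^2} and {-c - b y^2} each contain more than half of the field. *)
Lemma diagonal_conic_solvable (F : finFieldType) (a b c : F) : a != 0 -> b != 0 ->
  exists x y, a * x ^+ 2 + b * y ^+ 2 + c = 0.
Proof.
move=> a0 b0; set S := [set x ^+ 2 | x in [set: F]].
set A := [set a * s | s in S]; set C := [set - c - b * s | s in S].
have cA : #|A| = #|S| by apply: card_in_imset => s t _ _; apply: mulfI.
have cC : #|C| = #|S|.
  by apply: card_in_imset => s t _ _ /= /addrI /oppr_inj; apply: mulfI.
have : ~~ [disjoint A & C].
  apply/negP => dis; have := subset_leq_card (subsetT (A :|: C)).
  rewrite cardsU cardsT (disjoint_setI0 dis) cards0 subn0 cA cC addnn -mul2n.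
  by rewrite leqNgt card_squares_gt.
case/pred0Pn => z /andP [/imsetP [_ /imsetP [x _ ->] ->] /imsetP [_ /imsetP [y _ ->]]].
by move=> e; exists x, y; rewrite e subrK addrC subrr.
Qed.

Lemma exists_left_kernel_vector (K : fieldType) k l (A : 'M[K]_(k, l)) : (l < k)%N ->
  exists2 y : 'cV[K]_k, y != 0 & y^T *m A = 0.
Proof.
move=> lk; have K0 : kermx A != 0.
  rewrite kermx_eq0 /row_free; apply: contraTN lk => /eqP rA.
  by rewrite -leqNgt -rA rank_leq_col.
exists (nz_row (kermx A))^T; last by rewrite trmxK; apply/sub_kermxP; apply: nz_row_sub.
by apply: contra K0 => /eqP y0; rewrite -nz_row_eq0 -(trmxK (nz_row _)) y0 linear0.
Qed.

Lemma scaler_injl (K : fieldType) (V : lmodType K) (v : V) :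
  v != 0 -> injective (fun s : K => s *: v).
Proof.
move=> v0 s t /eqP; rewrite -subr_eq0 -scalerBl scaler_eq0 (negbTE v0) orbF.
by rewrite subr_eq0 => /eqP.
Qed.

Section SymmetricForm.
Variables (F : fieldType) (n : nat) (B : 'M[F]_n).

Definition bf (x y : 'cV[F]_n) : F := (x^T *m B *m y) 0 0.
Local Notation Q x := (bf x x).

Lemma bf_scalar x y : x^T *m B *m y = (bf x y)%:M.
Proof. exact: mx11_scalar. Qed.

Lemma bfDr x y z : bf x (y + z) = bf x y + bf x z.
Proof. by rewrite /bf mulmxDr mxE. Qed.
Lemma bfZr x c y : bf x (c *: y) = c * bf x y.
Proof. by rewrite /bf -scalemxAr mxE. Qed.
Lemma bfNr x y : bf x (- y) = - bf x y.
Proof. by rewrite /bf mulmxN mxE. Qed.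
Lemma bf0r x : bf x 0 = 0.
Proof. by rewrite /bf mulmx0 mxE. Qed.

Lemma bf_nondegenerate v : B \in unitmx -> v != 0 -> exists w, bf v w = 1.
Proof.
move=> Bu v0; have vB0 : v^T *m B != 0.
  rewrite mulmx_free_eq0 ?row_free_unit //.
  by apply: contra v0 => /eqP vT0; rewrite -(trmxK v) vT0 linear0.
have [k vBk] : exists k, (v^T *m B) 0 k != 0.
  apply/existsP; apply: contraR vB0; rewrite negb_exists => /forallP vBk.
  apply/eqP/matrixP => i j; rewrite ord1 [RHS]mxE.
  by move: (vBk j); rewrite negbK => /eqP.
exists (((v^T *m B) 0 k)^-1 *: delta_mx k 0).
by rewrite bfZr /bf -colE [col _ _ _ _]mxE mulVf.
Qed.

Hypothesis Bsym : B^T = B.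

Lemma bfC x y : bf x y = bf y x.
Proof.
have trE (M : 'M[F]_1) : M 0 0 = M^T 0 0 by rewrite mxE.
by rewrite /bf [RHS]trE !trmx_mul trmxK Bsym mulmxA.
Qed.

Lemma bfDl x y z : bf (y + z) x = bf y x + bf z x.
Proof. by rewrite !(bfC _ x) bfDr. Qed.
Lemma bfZl x c y : bf (c *: y) x = c * bf y x.
Proof. by rewrite !(bfC _ x) bfZr. Qed.
Lemma bfNl x y : bf (- y) x = - bf y x.
Proof. by rewrite !(bfC _ x) bfNr. Qed.

Lemma QD x y : Q (x + y) = Q x + Q y + 2%:R * bf x y.
Proof. by rewrite bfDl !bfDr (bfC y x); ring. Qed.
Lemma QZ c x : Q (c *: x) = c ^+ 2 * Q x.
Proof. by rewrite bfZl bfZr mulrA expr2. Qed.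
Lemma QN x : Q (- x) = Q x.
Proof. by rewrite bfNl bfNr opprK. Qed.

Lemma QZ_eq0 c x : c != 0 -> (Q (c *: x) == 0) = (Q x == 0).
Proof. by move=> c0; rewrite QZ mulf_eq0 expf_eq0 /= (negbTE c0). Qed.

(* In dimension at most 3 a nondegenerate form has no totally isotropic plane:
   an isotropic vector orthogonal to a nonzero isotropic v lies on the line of v.
   Otherwise the rows P of [v y]^T would satisfy P B P^T = 0, forcing
   2 rank P <= n. *)
Lemma isotropic_orthogonal_collinear v y :
  (n <= 3)%N -> B \in unitmx -> v != 0 -> Q v = 0 -> bf v y = 0 -> Q y = 0 ->
  exists s, y = s *: v.
Proof.
move=> n3 Bu v0 Qv vy Qy.
have [/sub_rVP [s ys] | yv] := boolP (y^T <= v^T)%MS.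
  by exists s; apply: trmx_inj; rewrite ys linearZ.
have vT0 : v^T != 0 by apply: contra v0 => /eqP vT0; rewrite -(trmxK v) vT0 linear0.
set P := col_mx v^T y^T.
have rankP : (2 <= \rank P)%N.
  rewrite /P -addsmxE; apply: leq_trans (rank_ltmx (_ : v^T < _)%MS).
    by rewrite rank_rV vT0.
  rewrite ltmxE addsmxSl /=.
  by apply: contra yv; apply: submx_trans (addsmxSr _ _).
have PBP : P *m B *m P^T = 0.
  rewrite /P tr_col_mx !trmxK mul_col_mx mul_mx_row !mul_col_mx !bf_scalar.
  by rewrite vy (bfC y v) vy Qv Qy raddf0 col_mx0 row_mx0.
have : (P *m B <= kermx P^T)%MS by apply/sub_kermxP.
move/mxrankS; rewrite mxrank_ker mxrank_tr mxrankMfree ?row_free_unit //.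
by lia.
Qed.

End SymmetricForm.

Section FiniteForm.
Variables (F : finFieldType) (n : nat) (B : 'M[F]_n).
Hypothesis Bu : B \in unitmx.

(* An affine hyperplane {x | bf v x = c} has q^(n-1) points: with bf v w = 1,
   x |-> (bf v x - c, x - (bf v x - c) w) splits F^n as F times the hyperplane. *)
Lemma card_affine_hyperplane v c : v != 0 ->
  (#|F| * #|[set x | bf B v x == c]|)%N = (#|F| ^ n)%N.
Proof.
move=> v0; have [w vw] := bf_nondegenerate Bu v0.
have := @card_bij_prod _ _ _ [set: F] [set x | bf B v x == c] [set: 'cV[F]_n]
  (fun p => p.2 + p.1 *: w) (fun y => (bf B v y - c, y - (bf B v y - c) *: w)).
rewrite !cardsT card_mx muln1 => <- //=.
- move=> a b _; rewrite !inE => /eqP vb; split=> //.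
  by rewrite bfDr bfZr vw mulr1 vb addrAC subrr add0r addrK.
- move=> u _; rewrite !inE subrK; split=> //.
  by rewrite bfDr bfNr bfZr vw mulr1 opprB addrC subrK.
Qed.

End FiniteForm.

Section ProjectivePoints.
Variables (F : finFieldType) (n : nat) (B : 'M[F]_n).
Variables (m : nat) (x : 'I_m -> 'cV[F]_n).
Hypothesis reps : proj_reps x.

Lemma repmx_form_entry i j : ((repmx x)^T *m B *m repmx x) i j = bf B (x i) (x j).
Proof.
rewrite /bf !mxE; apply: eq_bigr => k _; rewrite !mxE; congr (_ * _).
by apply: eq_bigr => l _; rewrite !mxE.
Qed.

(* Counting points off the hyperplane v^perp: the points j with bf v (x j) != 0
   and a scale-invariant property P correspond bijectively, by normalising
   x j to pair to 1 with v, to the vectors y with bf v y = 1 satisfying P. *)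
Lemma card_points_off_hyperplane v (P : pred 'cV[F]_n) :
  (forall c y, c != 0 -> P (c *: y) = P y) ->
  #|[set j | (bf B v (x j) != 0) && P (x j)]| = #|[set y | (bf B v y == 1) && P y]|.
Proof.
case: reps => _ xinj xsurj Pinv.
pose g j := (bf B v (x j))^-1 *: x j.
rewrite -(@card_in_imset _ _ g).
  apply: eq_card => y; apply/imsetP/idP.
    case=> j; rewrite inE => /andP [vj Pj] ->.
    by rewrite inE /g bfZr mulVf // eqxx Pinv // invr_eq0.
  rewrite inE => /andP [/eqP vy Py].
  have y0 : y != 0 by apply: contra_eq_neq vy => ->; rewrite bf0r eq_sym oner_neq0.
  have [i [c c0 yc]] := xsurj y y0.
  have vi : c * bf B v (x i) = 1 by rewrite -bfZr -yc.
  have vi0 : bf B v (x i) != 0.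
    by apply: contra_eq_neq vi => ->; rewrite mulr0 eq_sym oner_neq0.
  exists i; first by rewrite inE vi0 -(Pinv c) // -yc.
  by rewrite /g yc; congr (_ *: _); apply: (mulfI vi0); rewrite mulfV // mulrC vi.
move=> i j; rewrite !inE => /andP [vi _] /andP [vj _] /= gij.
apply: (xinj i j (bf B v (x i) * (bf B v (x j))^-1)); first by rewrite mulf_neq0 ?invr_eq0.
by rewrite -scalerA; rewrite /g in gij; rewrite -gij scalerA mulfV // scale1r.
Qed.

End ProjectivePoints.

Section TernaryForm.
Variables (F : finFieldType) (B : 'M[F]_3).
Hypotheses (Bsym : B^T = B) (Bu : B \in unitmx).
Local Notation Q x := (bf B x x).

Lemma card_plane v c : v != 0 -> #|[set x | bf B v x == c]| = (#|F| ^ 2)%N.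
Proof.
move=> v0; apply/eqP; rewrite -(eqn_pmul2l (ltnW (card_finField_gt1 F))).
by rewrite -expnS card_affine_hyperplane.
Qed.

(* The plane v^perp (q^2 points) is not the line of v (q points), and its
   isotropic vectors all lie on that line, so it has an anisotropic vector. *)
Lemma orthogonal_anisotropic v : v != 0 -> Q v = 0 ->
  exists2 u, bf B v u = 0 & Q u != 0.
Proof.
move=> v0 Qv.
have line_small :
    (#|[set s *: v | s in [set: F]]| < #|[set x | bf B v x == 0%R]|)%N.
  rewrite card_plane //; apply: leq_ltn_trans (leq_imset_card _ _) _.
  have q1 := card_finField_gt1 F.
  by rewrite cardsT expnS -{1}(muln1 #|F|) ltn_pmul2l // ltnW.
have : ~~ ([set x | bf B v x == 0] \subset [set s *: v | s in [set: F]]).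
  by apply: contraTN line_small => /subset_leq_card; rewrite -leqNgt.
case/subsetPn => u; rewrite inE => /eqP vu uv; exists u => //.
apply: contra uv => /eqP Qu.
have [s ->] := isotropic_orthogonal_collinear Bsym (leqnn 3) Bu v0 Qv vu Qu.
by apply/imsetP; exists s.
Qed.

(* Characteristic 2: squaring is injective, hence onto, so some z0 = w + t u
   (bf v w = 1, u anisotropic in v^perp) is isotropic; Q is additive on v^perp
   translates, and the isotropic points of the plane bf v x = 1 form the line
   z0 + F v. *)
Lemma card_isotropic_on_plane_char2 v : (2%:R : F) = 0 -> v != 0 -> Q v = 0 ->
  #|[set x | (bf B v x == 1) && (Q x == 0)]| = #|F|.
Proof.
move=> two0 v0 Qv; have [u vu Qu] := orthogonal_anisotropic v0 Qv.
have [w vw] := bf_nondegenerate Bu v0.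
have sq_inj : injective (fun a : F => a ^+ 2).
  move=> a b /= ab; apply/eqP; rewrite -subr_eq0.
  suff : (a - b) ^+ 2 == 0 by rewrite expf_eq0.
  by rewrite sqrrB ab -mulr_natr two0 mulr0 subr0 -mulr2n -mulr_natr two0 mulr0.
have [t tE] : exists t, t ^+ 2 = Q w / Q u.
  by have [g _ gK] := injF_bij sq_inj; exists (g (Q w / Q u)); rewrite gK.
set z0 := w + t *: u.
have vz0 : bf B v z0 = 1 by rewrite bfDr bfZr vu mulr0 addr0.
have Qz0 : Q z0 = 0.
  by rewrite QD // QZ // tE divfK // two0 mul0r addr0 -mulr2n -mulr_natr two0 mulr0.
have -> : [set x | (bf B v x == 1) && (Q x == 0)] = [set z0 + s *: v | s in [set: F]].
  apply/setP => x; rewrite inE; apply/andP/imsetP => [[/eqP vx /eqP Qx] | [s _ ->]].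
    have vxz : bf B v (x - z0) = 0 by rewrite bfDr bfNr vx vz0 subrr.
    have Qxz : Q (x - z0) = 0 by rewrite QD // QN // Qx Qz0 two0 mul0r !addr0.
    have [s sE] := isotropic_orthogonal_collinear Bsym (leqnn 3) Bu v0 Qv vxz Qxz.
    by exists s; rewrite // -sE addrC subrK.
  by rewrite bfDr bfZr Qv mulr0 addr0 vz0 QD // QZ // Qv Qz0 two0 mulr0 mul0r !addr0.
rewrite card_in_imset ?cardsT // => s s' _ _ /= /addrI.
exact: (@scaler_injl _ 'cV[F]_3 v v0).
Qed.

(* Odd characteristic: on the plane bf v x = 1, Q (z + s v) = Q z + 2 s, so
   x |-> (Q x / 2, x - (Q x / 2) v) splits the plane as F times its isotropic
   points. *)
Lemma card_isotropic_on_plane_odd v : (2%:R : F) != 0 -> v != 0 -> Q v = 0 ->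
  #|[set x | (bf B v x == 1) && (Q x == 0)]| = #|F|.
Proof.
move=> two0 v0 Qv.
have QvE z s : bf B v z = 1 -> Q (z + s *: v) = Q z + s * 2%:R.
  by move=> vz; rewrite QD // QZ // Qv bfZr (bfC Bsym z v) vz mulr0 addr0 mulr1 mulrC.
have := @card_bij_prod _ _ _ [set: F] [set x | (bf B v x == 1) && (Q x == 0)]
  [set x | bf B v x == 1]
  (fun p => p.2 + p.1 *: v) (fun x => (Q x / 2%:R, x - (Q x / 2%:R) *: v)).
rewrite cardsT card_plane // => cardE; apply/eqP.
rewrite -(eqn_pmul2l (ltnW (card_finField_gt1 F))) mulnn cardE //=.
- move=> a z _; rewrite !inE => /andP [/eqP vz /eqP Qz].
  by rewrite bfDr bfZr Qv mulr0 addr0 vz QvE // Qz add0r mulfK // addrK.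
- move=> y; rewrite inE => /eqP vy; split; rewrite ?subrK // !inE.
  rewrite bfDr bfNr bfZr Qv mulr0 subr0 vy eqxx -scaleNr QvE // mulNr divfK //.
  by apply/eqP/subrr.
Qed.

Lemma card_isotropic_on_plane v : v != 0 -> Q v = 0 ->
  #|[set x | (bf B v x == 1) && (Q x == 0)]| = #|F|.
Proof.
have [/eqP two0 | two0] := boolP ((2%:R : F) == 0).
  exact: card_isotropic_on_plane_char2.
exact: card_isotropic_on_plane_odd.
Qed.

(* Three pairwise orthogonal anisotropic vectors: by the conic lemma some
   x e1 + y e2 + e3 is isotropic, and it is nonzero as it pairs with e3 to Q e3. *)
Lemma isotropic_of_orthogonal_triple e1 e2 e3 :
  bf B e1 e2 = 0 -> bf B e1 e3 = 0 -> bf B e2 e3 = 0 ->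
  Q e1 != 0 -> Q e2 != 0 -> Q e3 != 0 -> exists2 v, v != 0 & Q v = 0.
Proof.
move=> e12 e13 e23 Q1 Q2 Q3; have [a [b abE]] := diagonal_conic_solvable (Q e3) Q1 Q2.
have bfCB := bfC Bsym; exists (a *: e1 + b *: e2 + e3).
  apply: contra Q3 => /eqP v0; have := bf0r B e3; rewrite -v0 !bfDr !bfZr.
  by rewrite !(bfCB e3) e13 e23 !mulr0 !add0r => ->.
rewrite !QD // !QZ // (bfDl Bsym) !(bfZl Bsym) !bfZr e12 e13 e23 !mulr0 !addr0.
by rewrite mulr0 addr0 (mulrC (a ^+ 2)) (mulrC (b ^+ 2)).
Qed.

(* Every symmetric ternary form over a finite field is isotropic: build an
   orthogonal basis e1, e2, e3 from kernel vectors, stopping at an isotropic one. *)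
Lemma exists_isotropic : exists2 v : 'cV[F]_3, v != 0 & Q v = 0.
Proof.
have bfE (y e : 'cV[F]_3) : y^T *m (B *m e) = 0 -> bf B y e = 0.
  by rewrite /bf -mulmxA => ->; rewrite mxE.
set e1 : 'cV[F]_3 := delta_mx 0 0.
have e10 : e1 != 0.
  by apply/eqP => /matrixP/(_ 0 0); rewrite !mxE /= => /eqP; rewrite oner_eq0.
have [Q1 | Q1] := eqVneq (Q e1) 0; first by exists e1.
have [e2 e20 /bfE e21] := exists_left_kernel_vector (B *m e1) isT.
have [Q2 | Q2] := eqVneq (Q e2) 0; first by exists e2.
have [e3 e30] := exists_left_kernel_vector (row_mx (B *m e1) (B *m e2)) isT.
rewrite mul_mx_row -row_mx0 => /eq_row_mx [/bfE e31 /bfE e32].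
have [Q3 | Q3] := eqVneq (Q e3) 0; first by exists e3.
by apply: (isotropic_of_orthogonal_triple _ _ _ Q1 Q2 Q3); rewrite bfC.
Qed.

Variables (m : nat) (x : 'I_m -> 'cV[F]_3).
Hypothesis reps : proj_reps x.

Lemma reps_neq0 i : x i != 0.
Proof. by case: reps. Qed.

(* An isotropic point is non-orthogonal to exactly q isotropic points (other
   than itself, by isotropy)... *)
Lemma card_isotropic_nonorthogonal i : Q (x i) = 0 ->
  #|[set j | [&& j != i, bf B (x i) (x j) != 0 & Q (x j) == 0]]| = #|F|.
Proof.
move=> Qi; rewrite -(card_isotropic_on_plane (reps_neq0 i) Qi).
rewrite -(card_points_off_hyperplane B reps (x i) (P := fun y => Q y == 0)).
  by apply: eq_card => j; rewrite !inE; case: eqP => // ->; rewrite Qi eqxx.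
exact: QZ_eq0.
Qed.

(* ... and to q^2 - q anisotropic points: the plane bf (x i) y = 1 has q^2
   vectors, q of them isotropic. *)
Lemma card_anisotropic_nonorthogonal i : Q (x i) = 0 ->
  #|[set j | [&& j != i, bf B (x i) (x j) != 0 & Q (x j) != 0]]| = (#|F| ^ 2 - #|F|)%N.
Proof.
move=> Qi; have xi0 := reps_neq0 i.
rewrite -(card_plane 1 xi0) (card_pred_split _ (fun y => Q y == 0)).
rewrite card_isotropic_on_plane // addKn.
rewrite -(card_points_off_hyperplane B reps (x i) (P := fun y => Q y != 0)); last first.
  by move=> c y c0; rewrite QZ_eq0.
by apply: eq_card => j; rewrite !inE; case: eqP => // ->; rewrite Qi eqxx andbF.
Qed.

(* The conic has q + 1 points: x i itself, the q isotropic points not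
   orthogonal to it, and no other isotropic point of x_i^perp. *)
Lemma card_isotropic_points i : Q (x i) = 0 -> #|[set j | Q (x j) == 0]| = (#|F| + 1)%N.
Proof.
move=> Qi; rewrite (card_pred_split _ (fun j => bf B (x i) (x j) == 0)) addnC.
congr (_ + _)%N.
  rewrite -(card_isotropic_nonorthogonal Qi); apply: eq_card => j; rewrite !inE andbC.
  by case: (eqVneq j i) => [-> | //]; rewrite Qi eqxx.
suff -> : [set j | (Q (x j) == 0) && (bf B (x i) (x j) == 0)] = [set i] by rewrite cards1.
apply/setP => j; rewrite !inE.
apply/andP/eqP => [[/eqP Qj /eqP ij] | ->]; last by rewrite Qi eqxx.
have [s sE] := isotropic_orthogonal_collinear Bsym (leqnn 3) Bu (reps_neq0 i) Qi ij Qj.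
case: reps => _ xinj _; apply: (xinj j i s) => //.
by apply: contra (reps_neq0 j) => /eqP s0; rewrite sE s0 scale0r.
Qed.

End TernaryForm.

Definition conic_profile (q : nat) (T : finType) (G : rel T) : Prop :=
  #|[set v | ~~ G v v]| = (q + 1)%N /\
  (forall v, ~~ G v v ->
     #|[set w | [&& w != v, G v w & ~~ G w w]]| = q /\
     #|[set w | [&& w != v, G v w & G w w]]| = (q ^ 2 - q)%N).

Lemma conic_profile_iso q (T1 T2 : finType) (G1 : rel T1) (G2 : rel T2) :
  lgraph_iso G1 G2 -> conic_profile q G2 -> conic_profile q G1.
Proof.
case=> f [fbij fG] [nl2 adj2].
have cardE (P : pred T2) : #|[set a | P (f a)]| = #|[set b | P b]|.
  by rewrite -(on_card_preimset (onW_bij _ fbij)); apply: eq_card => a; rewrite !inE.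
split=> [|a]; first by rewrite -nl2 -cardE; apply: eq_card => a; rewrite !inE fG.
rewrite fG => /adj2 [nl_adj l_adj]; split; [rewrite -nl_adj | rewrite -l_adj];
  by rewrite -cardE; apply: eq_card => b; rewrite !inE !fG (bij_eq fbij).
Qed.

Lemma orthogonality_graph_profile (F : finFieldType) (B : 'M[F]_3) m
    (x : 'I_m -> 'cV[F]_3) :
  B^T = B -> B \in unitmx -> proj_reps x ->
  conic_profile #|F| [rel i j | bf B (x i) (x j) != 0].
Proof.
move=> Bsym Bu reps; have [v v0 Qv] := exists_isotropic Bsym.
have [i [c c0 vE]] : exists i, exists2 c, c != 0 & v = c *: x i.
  by case: reps => _ _ xsurj; apply: xsurj.
have Qi : bf B (x i) (x i) = 0 by apply/eqP; rewrite -(QZ_eq0 Bsym _ c0) -vE Qv.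
split=> [|j]; first by rewrite -(card_isotropic_points Bsym Bu reps Qi);
  apply: eq_card => j; rewrite !inE negbK.
rewrite /= negbK => /eqP Qj; split.
  rewrite -(card_isotropic_nonorthogonal Bsym Bu reps Qj).
  by apply: eq_card => k; rewrite !inE negbK.
rewrite -(card_anisotropic_nonorthogonal Bsym Bu reps Qj).
by apply: eq_card => k; rewrite !inE.
Qed.

Theorem mainTheorem17 (F : finFieldType) (T : finType) (G : rel T) :
  in_gk F 3 G ->
  #|[set v : T | ~~ G v v]| = (#|F| + 1)%N /\
  (forall v : T, ~~ G v v ->
     #|[set w : T | [&& w != v, G v w & ~~ G w w]]| = #|F| /\
     #|[set w : T | [&& w != v, G v w & G w w]]| = (#|F| ^ 2 - #|F|)%N).
Proof.
case=> m [x [B [reps Bsym Bu [f [fbij fG]]]]].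
apply: conic_profile_iso (orthogonality_graph_profile Bsym Bu reps).
by exists f; split=> // a b; rewrite fG /Gamma repmx_form_entry.
Qed.
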